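(* Let $n, l$ be positive integers and $p$ a prime such that $p^l$ divides $n$ but $p^{l+1}$ does not divide $n$. Let $S \subseteq \mathbb{Z}_n$ with $0 \notin S$, $S=-S$, $|S| = p^l - 1$, such that the circulant graph $\mathrm{Cay}(\mathbb{Z}_n,S)$ is connected. Then $\mathrm{Cay}(\mathbb{Z}_n,S)$ admits a perfect code if and only if $s \not\equiv s' \pmod{p^l}$ for all distinct $s, s' \in S \cup \{0\}$.
   Context: $\mathbb{Z}_n$ is the additive group of integers modulo $n$; elements are identified with integers in $\{0,1,\dots,n-1\}$ (since $p^l \mid n$, congruence modulo $p^l$ is well defined on $\mathbb{Z}_n$). For an inverse-closed subset $S$ of $\mathbb{Z}_n$ not containing $0$, the circulant graph $\mathrm{Cay}(\mathbb{Z}_n,S)$ has vertex set $\mathbb{Z}_n$, with $u,v$ adjacent iff $v-u\in S$; its degree is $|S|$. A perfect code in a graph $\Gamma=(V,E)$ is a subset $C\subseteq V$ that is an independent set such that every vertex of $V\setminus C$ is adjacent to exactly one vertex of $C$. *)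

From mathcomp Require Import all_boot.
Set Implicit Arguments. Unset Strict Implicit. Unset Printing Implicit Defensive.

(* Z_n is modelled by 'I_n: elements are the integers 0..n-1,
   addition/negation are taken modulo n. *)

Definition zneg (n : nat) (x : 'I_n) : nat := (n - x) %% n.

Definition inv_closed (n : nat) (S : {set 'I_n}) : Prop :=
  forall s : 'I_n, s \in S -> exists2 t : 'I_n, t \in S & val t = zneg s.

Definition cay_adj (n : nat) (S : {set 'I_n}) : rel 'I_n :=
  fun u v => [exists s in S, val v == (u + s) %% n].

Definition cay_connected (n : nat) (S : {set 'I_n}) : Prop :=
  forall u v : 'I_n, connect (cay_adj S) u v.

Definition perfect_code (n : nat) (S : {set 'I_n}) (C : {set 'I_n}) : Prop :=
  (forall u v : 'I_n, u \in C -> v \in C -> ~~ cay_adj S u v) /\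
  (forall v : 'I_n, v \notin C -> #|[set c in C | cay_adj S v c]| = 1).

From HB Require Import structures.
From mathcomp Require Import all_boot fingroup action ssralg finalg zmodp pgroup sylow.
Set Implicit Arguments. Unset Strict Implicit. Unset Printing Implicit Defensive.
Import GRing.Theory.

(* A perfect code C of Cay(Z_n, S) is the same thing as a set whose translates
   c - D, with D = S u {0}, partition Z_n; hence |C| p^l = n and p does not
   divide |C|.  If C tiles a finite abelian group with D and p does not divide
   |C|, then for every p-power k and every r some c in C has k c - r in D: Z_k
   acts by rotation on the k-tuples of elements of C whose sum lies in r + D,
   a set of size |C|^(k-1), which is prime to p, so some constant tuple is
   fixed.  With k = p^l this shows that D meets every residue class mod p^l,
   so D, of size p^l, is a complete residue system.  Conversely, if it is, the
   multiples of p^l form a perfect code. *)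

Section Rotation.
Variables (G : finZmodType) (k : nat).

Definition ffun_rot (t : {ffun 'I_k.+1 -> G}) (a : 'I_k.+1) : {ffun 'I_k.+1 -> G} :=
  [ffun i => t (i + a)%R].

Lemma ffun_rot1 : ffun_rot^~ 1%g =1 id.
Proof. by move=> t; apply/ffunP => i; rewrite ffunE addr0. Qed.

Lemma ffun_rotM t : act_morph ffun_rot t.
Proof. by move=> a b; apply/ffunP => i; rewrite !ffunE -addrA (addrC b). Qed.

Definition ffun_rot_action := TotalAction ffun_rot1 ffun_rotM.

End Rotation.

Section Tiling.
Local Open Scope ring_scope.
Variables (G : finZmodType) (C D : {set G}).

Definition tiling : Prop := forall v : G, exists! c, c \in C /\ c - v \in D.
Hypothesis tile : tiling.

Lemma tiling_card : (#|C| * #|D|)%N = #|G|.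
Proof.
have inj : {in setX C D &, injective (fun cd : G * G => cd.1 - cd.2)}.
  move=> [c d] [c' d'] /setXP[cC dD] /setXP[c'C d'D] /= e.
  have [c0 [_ c0_uniq]] := tile (c - d).
  have cc' : c = c'.
    by rewrite -(c0_uniq c) ?subKr // -(c0_uniq c') // e subKr.
  by move: e; rewrite -cc' => /addrI/oppr_inj ->.
rewrite -cardsX -cardsT -(card_in_imset inj).
apply: eq_card => v; rewrite inE; apply/imsetP.
have [c [[cC cvD] _]] := tile v.
by exists (c, c - v); rewrite ?inE ?cC //= subKr.
Qed.

Section Tuples.
Variables (k : nat) (r : G).

Let tuples := [set t : {ffun 'I_k.+1 -> G} |
  [forall i, t i \in C] & \sum_i t i - r \in D].

Lemma card_tuples : #|tuples| = (#|C| ^ k)%N.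
Proof.
pose init (t : {ffun 'I_k.+1 -> G}) : {ffun 'I_k -> G} :=
  [ffun i => t (lift ord_max i)].
have sum_init (t : {ffun 'I_k.+1 -> G}) :
    \sum_i t i = \sum_(i < k) init t i + t ord_max.
  rewrite big_ord_recr /=; congr (_ + _); apply: eq_bigr => i _.
  by rewrite ffunE; congr (t _); apply: val_inj; exact: esym (lift_max i).
have shift x s : x - (r - s) = s + x - r by rewrite opprB addrA [x + s]addrC.
have last_mem t :
    t \in tuples -> t ord_max \in C /\ t ord_max - (r - \sum_i init t i) \in D.
  by case/setIdP => /forallP tC; rewrite shift -sum_init.
have inj : {in tuples &, injective init}.
  move=> t t' tX t'X e; apply/ffunP => i.
  case: (unliftP ord_max i) => [j ->| ->].
    by move/ffunP: e => /(_ j); rewrite !ffunE.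
  have [c [_ c_uniq]] := tile (r - \sum_i init t i).
  have := last_mem t' t'X; rewrite -e => /c_uniq <-.
  exact/esym/c_uniq/last_mem.
rewrite -(card_in_imset inj) -[k in (_ ^ k)%N]card_ord -card_ffun_on.
apply: eq_card => u; apply/imsetP/ffun_onP => [[t /setIdP[/forallP tC _] ->] i|uC].
  by rewrite ffunE.
have [c [[cC cD] _]] := tile (r - \sum_i u i).
pose t := [ffun i => if unlift ord_max i is Some j then u j else c].
have init_t : init t = u by apply/ffunP => j; rewrite !ffunE liftK.
have t_last : t ord_max = c by rewrite ffunE unlift_none.
exists t => //; rewrite inE; apply/andP; split.
  by apply/forallP => i; rewrite ffunE; case: unliftP.
by rewrite sum_init init_t t_last -shift.
Qed.

Lemma tiling_mulrn_mem (p : nat) : prime p -> p.-nat k.+1 -> ~~ (p %| #|C|) ->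
  exists2 c, c \in C & c *+ k.+1 - r \in D.
Proof.
move=> p_pr pk pC.
have acts : [acts [set: 'I_k.+1], on tuples | ffun_rot_action G k].
  apply/subsetP => a _; apply/astabsP => t /=; rewrite !inE.
  have -> : \sum_i ffun_rot t a i = \sum_i t i.
    by rewrite [RHS](reindex_inj (addIr a)); apply: eq_bigr => i _; rewrite ffunE.
  congr (_ && _); apply/forallP/forallP => tC i; last by rewrite ffunE.
  by have := tC (i - a); rewrite ffunE subrK.
have pG : (p.-group [set: 'I_k.+1])%g by rewrite /pgroup cardsT card_ord.
have := pgroup_fix_mod pG acts; rewrite card_tuples.
have [->|[t]] := set_0Vmem ('Fix_(tuples | ffun_rot_action G k)([set: 'I_k.+1]))%g.
  rewrite cards0 mod0n => pCk.
  have : p %| #|C| ^ k by apply/eqP.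
  by rewrite Euclid_dvdX // (negbTE pC).
move=> /setIP[/setIdP[/forallP tC tD] /afixP t_fixed] _.
have t_const i : t i = t 0.
  by have /ffunP/(_ 0) := t_fixed i (in_setT i); rewrite ffunE add0r.
exists (t 0) => //.
suff <- : \sum_i t i = t 0 *+ k.+1 by [].
by rewrite (eq_bigr _ (fun i _ => t_const i)) sumr_const card_ord.
Qed.
End Tuples.
End Tiling.

Lemma inj_in_iff_onto (aT rT : finType) (f : aT -> rT) (A : {set aT}) :
  #|A| = #|rT| -> {in A &, injective f} <-> f @: A = setT.
Proof.
move=> cardA; split => [f_inj | f_onto].
  by apply/eqP; rewrite eqEcard subsetT cardsT (card_in_imset f_inj) cardA leqnn.
by apply/imset_injP; rewrite f_onto cardsT cardA.
Qed.

Section CayleyCodes.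
Local Open Scope ring_scope.
Variables (m : nat) (S : {set 'I_m.+1}).

Lemma cay_adjE u v : cay_adj S u v = (v - u \in S).
Proof.
apply/existsP/idP => [[s /andP[sS /eqP vE]] | vuS].
  have -> : v = u + s by exact: val_inj.
  by rewrite [u + s]addrC addrK.
by exists (v - u); rewrite vuS -[X in _ == X]/(val (u + (v - u))) addrC subrK eqxx.
Qed.

Lemma perfect_code_tiling (C : {set 'I_m.+1}) :
  0 \notin S -> perfect_code S C <-> tiling C (0 |: S).
Proof.
move=> S0; split => [[C_indep C_one] v | tile].
  have [vC | vC] := boolP (v \in C).
    exists v; split; first by rewrite vC subrr setU11.
    move=> c [cC]; rewrite in_setU1 subr_eq0 => /orP[/eqP -> // | cvS].
    by have := C_indep v c vC cC; rewrite cay_adjE cvS.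
  have /eqP/cards1P[c0 N_v] := C_one v vC.
  have N_vP c : (c \in C) && (c - v \in S) = (c == c0).
    by rewrite -in_set1 -N_v inE cay_adjE.
  have /andP[c0C c0vS] : (c0 \in C) && (c0 - v \in S) by rewrite N_vP.
  exists c0; split; first by rewrite c0C setU1r.
  move=> c [cC]; rewrite in_setU1 subr_eq0 => /orP[/eqP cv | cvS].
    by rewrite -cv cC in vC.
  by apply/esym/eqP; rewrite -N_vP cC.
split => [u v uC vC | v vC].
  apply/negP; rewrite cay_adjE => vuS.
  have [c [_ c_uniq]] := tile u.
  have uv : u = v.
    by rewrite -(c_uniq u) ?subrr ?setU11 // (c_uniq v) // vC setU1r.
  by move: vuS; rewrite uv subrr (negbTE S0).
have [c [[cC cvD] c_uniq]] := tile v.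
apply/eqP/cards1P; exists c; apply/setP => c'; rewrite !inE cay_adjE.
apply/andP/eqP => [[c'C c'vS] | ->]; first by rewrite (c_uniq c') ?c'vS ?setU1r.
move: cvD; rewrite in_setU1 subr_eq0 => /orP[/eqP cv | //].
by rewrite -cv cC in vC.
Qed.

End CayleyCodes.

Definition Zp_mod m q (x : 'I_m.+1) : 'I_q.+1 := inZp x.
Arguments Zp_mod {m} q x.

Lemma Zp_mod_eq m q (x y : 'I_m.+1) :
  (Zp_mod q x == Zp_mod q y) = (x == y %[mod q.+1]).
Proof. by []. Qed.

Section ResidueMap.
Local Open Scope ring_scope.
Variables (m q : nat).
Hypothesis q_dvd_m : (q.+1 %| m.+1)%N.

Lemma Zp_mod_is_zmod_morphism : zmod_morphism (Zp_mod q : 'I_m.+1 -> 'I_q.+1).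
Proof.
have Zp_modD (x y : 'I_m.+1) : Zp_mod q (x + y) = Zp_mod q x + Zp_mod q y.
  by apply: val_inj; rewrite /= modn_dvdm // modnDm.
move=> x y; rewrite Zp_modD; congr (_ + _).
apply: (addrI (Zp_mod q y)); rewrite -Zp_modD !subrr.
by apply: val_inj; rewrite /= mod0n.
Qed.

HB.instance Definition _ :=
  GRing.isZmodMorphism.Build _ _ (Zp_mod q) Zp_mod_is_zmod_morphism.

Lemma Zp_mod_mulrn_modulus (x : 'I_m.+1) : Zp_mod q (x *+ q.+1) = 0.
Proof. by rewrite raddfMn Zp_mulrn; apply: val_inj; rewrite /= modnMl. Qed.

Lemma Zp_mod_inZp (y : 'I_q.+1) : Zp_mod q (inZp y : 'I_m.+1) = y.
Proof. by apply: val_inj; rewrite /= modn_dvdm // modn_small. Qed.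

Lemma tiling_Zp_mod_onto (p : nat) (C D : {set 'I_m.+1}) :
  prime p -> p.-nat q.+1 -> ~~ (p %| #|C|)%N -> tiling C D ->
  Zp_mod q @: D = setT.
Proof.
move=> p_pr pq pC tile; apply/setP => y; rewrite inE; apply/imsetP.
have [c _ cD] := tiling_mulrn_mem tile (- inZp y) p_pr pq pC.
exists (c *+ q.+1 - - inZp y) => //.
by rewrite opprK raddfD /= Zp_mod_mulrn_modulus add0r Zp_mod_inZp.
Qed.

Lemma Zp_mod_kernel_tiling (D : {set 'I_m.+1}) :
  {in D &, injective (Zp_mod q)} -> Zp_mod q @: D = setT ->
  tiling [set x | Zp_mod q x == 0] D.
Proof.
move=> D_inj D_onto v.
have /imsetP[d dD dv] : - Zp_mod q v \in Zp_mod q @: D by rewrite D_onto inE.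
exists (v + d); split.
  by rewrite inE raddfD /= -dv subrr eqxx [v + d]addrC addrK.
move=> c [/[!inE]/eqP c0 cvD].
have -> : d = c - v by apply: D_inj; rewrite // raddfB /= c0 sub0r.
by rewrite addrC subrK.
Qed.

End ResidueMap.

Lemma distinct_residuesE m q (S : {set 'I_m.+1}) :
  (forall s s' : nat, s \in 0 :: [seq val x | x in S] ->
     s' \in 0 :: [seq val x | x in S] -> s != s' -> s != s' %[mod q.+1]) <->
  {in 0%R |: S &, injective (Zp_mod q)}.
Proof.
have memP s : reflect (exists2 x, x \in 0%R |: S & s = val x)
                      (s \in 0 :: [seq val x | x in S]).
  rewrite in_cons; apply: (iffP orP) => [[/eqP-> | /imageP[x xS ->]] | [x]].
  - by exists 0%R; rewrite ?setU11.
  - by exists x; rewrite ?setU1r.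
  rewrite in_setU1 => /orP[/eqP-> ->| xS ->]; first by left.
  by right; apply: image_f.
split => [distinct x y xD yD /eqP | D_inj s s' /memP[x xD ->] /memP[y yD ->]].
  rewrite Zp_mod_eq; apply: contraTeq => xy.
  by apply: distinct; rewrite ?val_eqE //; apply/memP; [exists x | exists y].
by apply: contra; rewrite -Zp_mod_eq => /eqP/(D_inj _ _ xD yD) ->.
Qed.

Theorem theorem1p2 (n l p : nat) (S : {set 'I_n}) :
  0 < n -> 0 < l -> prime p ->
  p ^ l %| n -> ~~ (p ^ l.+1 %| n) ->
  (forall s : 'I_n, s \in S -> val s != 0) ->
  inv_closed S ->
  #|S| = p ^ l - 1 ->
  cay_connected S ->
  (exists C : {set 'I_n}, perfect_code S C) <->
  (forall s s' : nat, (s \in 0 :: [seq val x | x in S]) ->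
     (s' \in 0 :: [seq val x | x in S]) -> s != s' -> s != s' %[mod p ^ l]).
Proof.
case: n S => [//|m] S _ _ p_pr pl_dvd npl1_dvd S_nz _ cardS _.
have [q pl_eq] : exists q, p ^ l = q.+1.
  by exists (p ^ l).-1; rewrite prednK // expn_gt0 prime_gt0.
rewrite expnSr pl_eq in npl1_dvd; rewrite pl_eq in pl_dvd cardS *.
have S0 : 0%R \notin S by apply/negP => /S_nz.
have cardD : #|0%R |: S| = #|'I_q.+1| by rewrite cardsU1 S0 cardS card_ord subn1.
apply: (iff_trans _ (iff_sym (distinct_residuesE q S))).
apply: (iff_trans _ (iff_sym (inj_in_iff_onto _ cardD))).
split => [[C /(perfect_code_tiling _ S0) tile] | D_onto].
  have pC : ~~ (p %| #|C|).
    apply: contra npl1_dvd => pC.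
    by rewrite -(card_ord m.+1) -(tiling_card tile) mulnC cardD card_ord dvdn_mul.
  have pq : p.-nat q.+1 by rewrite -pl_eq pnatX pnat_id.
  by rewrite (tiling_Zp_mod_onto pl_dvd p_pr pq pC tile).
exists [set x | Zp_mod q x == 0%R]; apply/perfect_code_tiling => //.
by apply: Zp_mod_kernel_tiling => //; apply/(inj_in_iff_onto _ cardD).
Qed.
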